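(* Let $-1\le a<1$ and let $\mathfrak g=\mathfrak r_{3,a}$, the Lie algebra with basis $\{e_1,e_2,e_3\}$ and nonzero brackets $[e_1,e_2]=e_2$, $[e_1,e_3]=ae_3$, identified with $\mathbb R^3$ via this basis. Then $$U=\left\{\begin{pmatrix}1&0&0\\0&1&0\\0&\lambda&1\end{pmatrix}:\lambda\in\mathbb R\right\}$$ is a set of representatives of $\mathcal{PM}(\mathfrak g)$.
   Context: $\mathcal M(\mathfrak g)$ is the set of inner products on $\mathfrak g\cong\mathbb R^3$, with $\mathrm{GL}_3(\mathbb R)$-action $g.\langle\cdot,\cdot\rangle=\langle g^{-1}\cdot,g^{-1}\cdot\rangle$; $\langle\cdot,\cdot\rangle_0$ makes $\{e_1,e_2,e_3\}$ orthonormal. Two inner products are isometric up to scaling if $\langle\cdot,\cdot\rangle_1=k\langle f\cdot,f\cdot\rangle_2$ for some $k>0$ and Lie algebra automorphism $f$; $[\langle\cdot,\cdot\rangle]$ denotes the equivalence class and $\mathcal{PM}(\mathfrak g)$ the set of classes. A subset $U\subset\mathrm{GL}_3(\mathbb R)$ is a set of representatives of $\mathcal{PM}(\mathfrak g)$ if $\mathcal{PM}(\mathfrak g)=\{[h.\langle\cdot,\cdot\rangle_0]: h\in U\}$. *)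

From HB Require Import structures.
From mathcomp Require Import all_boot all_order all_algebra.
From mathcomp Require Import reals.
Set Implicit Arguments. Unset Strict Implicit. Unset Printing Implicit Defensive.
Import Order.TTheory GRing.Theory Num.Theory.
Local Open Scope ring_scope.

(* g = R^3, vectors are columns 'cV[R]_3 in the basis (e1,e2,e3) =
   indices 0,1,2. *)

(* Bracket of r_{3,a}: [e1,e2] = e2, [e1,e3] = a e3, [e2,e3] = 0,
   extended bilinearly and antisymmetrically. *)
Definition r3a_bracket {R : comRingType} (a : R) (x y : 'cV[R]_3) : 'cV[R]_3 :=
  \col_(i < 3)
    if (i == 1 :> nat) then x 0%R 0 * y 1%R 0 - x 1%R 0 * y 0%R 0
    else if (i == 2 :> nat) then a * (x 0%R 0 * y 2%:R 0 - x 2%:R 0 * y 0%R 0)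
    else 0.

Definition is_inner_product {R : realType} (ip : 'cV[R]_3 -> 'cV[R]_3 -> R) : Prop :=
  [/\ (forall x y, ip x y = ip y x),
      (forall (c : R) x y z, ip (c *: x + y) z = c * ip x z + ip y z)
    & (forall x, x != 0 -> 0 < ip x x)].

Definition ip0 {R : realType} (x y : 'cV[R]_3) : R := (x^T *m y) 0 0.

Definition gl_act {R : realType} (g : 'M[R]_3) (ip : 'cV[R]_3 -> 'cV[R]_3 -> R)
  : 'cV[R]_3 -> 'cV[R]_3 -> R :=
  fun x y => ip (invmx g *m x) (invmx g *m y).

Definition is_lie_aut {R : realType} (a : R) (f : 'M[R]_3) : Prop :=
  f \in unitmx /\
  forall x y, f *m r3a_bracket a x y = r3a_bracket a (f *m x) (f *m y).

Definition iso_up_to_scaling {R : realType} (a : R)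
  (ip1 ip2 : 'cV[R]_3 -> 'cV[R]_3 -> R) : Prop :=
  exists k : R, exists f : 'M[R]_3,
    0 < k /\ is_lie_aut a f /\
    forall x y, ip1 x y = k * ip2 (f *m x) (f *m y).

Definition U_mat {R : realType} (lam : R) : 'M[R]_3 :=
  \matrix_(i < 3, j < 3)
    if (i == j :> nat) then 1
    else if (i == 2 :> nat) && (j == 1 :> nat) then lam else 0.

From HB Require Import structures.
From mathcomp Require Import all_boot all_order all_algebra.
From mathcomp Require Import reals ring.
Set Implicit Arguments.
Unset Strict Implicit.
Unset Printing Implicit Defensive.

Import Order.TTheory GRing.Theory Num.Theory.
Local Open Scope ring_scope.

(* Completing squares from the last coordinate (Lagrange reduction) writes an
   inner product on R^3 as A l2^2 + d l1^2 + k x0^2 with A, d, k > 0,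
   l2 = x2 + b x1 + c x0 and l1 = x1 + e x0.  The form (U_lam . ip0) is
   x0^2 + x1^2 + (x2 - lam x1)^2, and the lower triangular matrices
   [[1,0,0],[x,p,0],[y,0,q]] with p q <> 0 are automorphisms of r_{3,a}.
   Pulling (U_lam . ip0) back along such an automorphism and scaling by k,
   the choices of p, q absorb the weights d/k, A/k, those of x, y absorb e
   and c, and lam absorbs the remaining cross coefficient b. *)

Lemma sum3E (V : nmodType) (F : 'I_3 -> V) : \sum_(i < 3) F i = F 0 + F 1 + F 2.
Proof.
by rewrite !big_ord_recl big_ord0 addr0 addrA; congr (F _ + F _ + F _); apply: val_inj.
Qed.

Lemma mulmx3E (R : pzSemiRingType) m n (M : 'M[R]_(m, 3)) (x : 'M[R]_(3, n)) i j :
  (M *m x) i j = M i 0 * x 0 j + M i 1 * x 1 j + M i 2 * x 2 j.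
Proof. by rewrite mxE sum3E. Qed.

Lemma ord3_ind (P : 'I_3 -> Prop) : P 0 -> P 1 -> P 2 -> forall i, P i.
Proof.
move=> P0 P1 P2 [[|[|[|i]]] lt_i3] //.
- by have -> : Ordinal lt_i3 = 0 by apply/val_inj.
- by have -> : Ordinal lt_i3 = 1 by apply/val_inj.
- by have -> : Ordinal lt_i3 = 2 by apply/val_inj.
Qed.

Lemma cV_neq0 (R : nmodType) n (x : 'cV[R]_n) i : x i 0 != 0 -> x != 0.
Proof. by apply: contraNneq => ->; rewrite mxE. Qed.

Definition vec3 {R : nmodType} (a b c : R) : 'cV[R]_3 := \col_i [:: a; b; c]`_i.

Section BilinearForm.

Variables (R : comPzRingType) (n : nat) (b : 'cV[R]_n -> 'cV[R]_n -> R).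
Hypothesis b_sym : forall x y, b x y = b y x.
Hypothesis b_linear : forall c x y z, b (c *: x + y) z = c * b x z + b y z.

Definition gram : 'M[R]_n := \matrix_(i, j) b (delta_mx i 0) (delta_mx j 0).

Lemma form0l z : b 0 z = 0.
Proof.
have := b_linear 1 0 0 z; rewrite scaler0 addr0 mul1r.
by move/(congr1 (fun t => t - b 0 z)); rewrite /= subrr addrK => <-.
Qed.

Lemma formDl x y z : b (x + y) z = b x z + b y z.
Proof. by rewrite -{1}[x]scale1r b_linear mul1r. Qed.

Lemma formZl c x z : b (c *: x) z = c * b x z.
Proof. by rewrite -[c *: x]addr0 b_linear form0l addr0. Qed.

Lemma form_suml I (r : seq I) (P : pred I) (F : I -> 'cV[R]_n) z :
  b (\sum_(i <- r | P i) F i) z = \sum_(i <- r | P i) b (F i) z.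
Proof. by apply: (big_morph (b^~ z)) => [x y|]; rewrite ?formDl ?form0l. Qed.

Lemma bilinear_form_gramE u v : b u v = (u^T *m gram *m v) 0 0.
Proof.
have cV_sum (w : 'cV[R]_n) : w = \sum_i w i 0 *: delta_mx i 0.
  by rewrite {1}(matrix_sum_delta w); apply: eq_bigr => i _; rewrite big_ord1.
rewrite {1}(cV_sum u) form_suml mxE.
under [RHS]eq_bigr do rewrite mxE mulr_suml.
rewrite exchange_big; apply: eq_bigr => i _.
rewrite formZl b_sym {1}(cV_sum v) form_suml mulr_sumr; apply: eq_bigr => j _.
by rewrite formZl b_sym !mxE mulrA mulrAC.
Qed.

End BilinearForm.

Lemma ip0_inner_product (R : realType) : is_inner_product (@ip0 R).
Proof.
split.
- by move=> x y; rewrite /ip0 -[in RHS](trmxK x) -trmx_mul [RHS]mxE.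
- by move=> c x y z; rewrite /ip0 linearD linearZ /= mulmxDl -scalemxAl !mxE.
- move=> x x_neq0; rewrite /ip0 mxE.
  have sqr_ge0 i : 0 <= x^T 0 i * x i 0 by rewrite mxE -expr2 sqr_ge0.
  rewrite lt_def sumr_ge0 // andbT psumr_eq0 //.
  apply: contra x_neq0 => /allP x_eq0; apply/eqP/matrixP => i j.
  have := x_eq0 i (mem_index_enum i).
  by rewrite (ord1 j) !mxE mulf_eq0 orbb => /eqP.
Qed.

Lemma gl_act_inner_product (R : realType) (g : 'M[R]_3) ip :
  g \in unitmx -> is_inner_product ip -> is_inner_product (gl_act g ip).
Proof.
move=> g_unit [ip_sym ip_linear ip_pos]; split.
- by move=> x y; rewrite /gl_act ip_sym.
- by move=> c x y z; rewrite /gl_act mulmxDr -scalemxAr ip_linear.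
- move=> x x_neq0; apply: ip_pos; apply: contraNneq x_neq0 => g'x_eq0.
  by rewrite -(mulKVmx g_unit x) g'x_eq0 mulmx0.
Qed.

Lemma U_mat_mulN (R : realType) (lam : R) : U_mat lam *m U_mat (- lam) = 1%:M.
Proof.
by apply/matrixP => i j; elim/ord3_ind: i; elim/ord3_ind: j;
  rewrite mulmx3E !mxE /=; ring.
Qed.

Lemma U_mat_unit (R : realType) (lam : R) : U_mat lam \in unitmx.
Proof. by have [] := mulmx1_unit (U_mat_mulN lam). Qed.

Lemma invmx_U_mat (R : realType) (lam : R) : invmx (U_mat lam) = U_mat (- lam).
Proof. by rewrite -[LHS]mulmx1 -(U_mat_mulN lam) mulKmx ?U_mat_unit. Qed.

Lemma gl_act_U_mat_ip0E (R : realType) (lam : R) x y :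
  gl_act (U_mat lam) ip0 x y =
  x 0 0 * y 0 0 + x 1 0 * y 1 0 + (x 2 0 - lam * x 1 0) * (y 2 0 - lam * y 1 0).
Proof.
by rewrite /gl_act invmx_U_mat /ip0 !mulmx3E ![(_ *m _)^T _ _]mxE !mulmx3E !mxE /=; ring.
Qed.

Definition r3a_aut_mx {R : ringType} (x y p q : R) : 'M[R]_3 :=
  \matrix_(i, j) (nth [::] [:: [:: 1; 0; 0]; [:: x; p; 0]; [:: y; 0; q]] i)`_j.

Lemma r3a_aut_mx_lie_aut (R : realType) (a x y p q : R) :
  p != 0 -> q != 0 -> is_lie_aut a (r3a_aut_mx x y p q).
Proof.
move=> p_neq0 q_neq0; split.
  have aut_mulV : r3a_aut_mx x y p q *m r3a_aut_mx (- x / p) (- y / q) p^-1 q^-1 = 1%:M.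
    apply/matrixP => i j; elim/ord3_ind: i; elim/ord3_ind: j;
      by rewrite mulmx3E !mxE /=; field; rewrite ?p_neq0 ?q_neq0.
  by have [] := mulmx1_unit aut_mulV.
move=> u v; apply/matrixP => i j; rewrite (ord1 j); elim/ord3_ind: i;
  rewrite !mulmx3E ![r3a_bracket _ _ _ _ _]mxE /= ?mulmx3E !mxE /=; ring.
Qed.

Definition lagrange_form {R : pzRingType} (A d k b c e : R) (u v : 'cV[R]_3) : R :=
  A * (u 2 0 + b * u 1 0 + c * u 0 0) * (v 2 0 + b * v 1 0 + c * v 0 0)
  + d * (u 1 0 + e * u 0 0) * (v 1 0 + e * v 0 0) + k * (u 0 0 * v 0 0).

Lemma inner_product3_lagrange_form (R : realType) (ip : 'cV[R]_3 -> 'cV[R]_3 -> R) :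
  is_inner_product ip ->
  exists A d k b c e : R, [/\ 0 < A, 0 < d, 0 < k &
    ip =2 lagrange_form A d k b c e].
Proof.
move=> [ip_sym ip_linear ip_pos]; set G := gram ip.
have G_sym i j : G i j = G j i by rewrite !mxE ip_sym.
have ipE u v : ip u v =
    u 0 0 * v 0 0 * G 0 0 + (u 0 0 * v 1 0 + u 1 0 * v 0 0) * G 0 1
    + (u 0 0 * v 2 0 + u 2 0 * v 0 0) * G 0 2 + u 1 0 * v 1 0 * G 1 1
    + (u 1 0 * v 2 0 + u 2 0 * v 1 0) * G 1 2 + u 2 0 * v 2 0 * G 2 2.
  rewrite (bilinear_form_gramE ip_sym ip_linear) -/G !mulmx3E ![u^T _ _]mxE.
  by rewrite (G_sym 1 0) (G_sym 2 0) (G_sym 2 1); ring.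
pose A := G 2 2; pose b := G 1 2 / A; pose c := G 0 2 / A.
pose d := G 1 1 - A * b ^+ 2; pose e := (G 0 1 - A * b * c) / d.
pose k := G 0 0 - A * c ^+ 2 - d * e ^+ 2.
have A_gt0 : 0 < A.
  rewrite /A mxE; apply/ip_pos/(cV_neq0 (i := 2)).
  by rewrite mxE /= oner_neq0.
(* [d] and [k] are values of [ip] at vectors on which the preceding squares vanish. *)
have d_gt0 : 0 < d.
  have -> : d = ip (vec3 0 1 (- b)) (vec3 0 1 (- b)).
    by rewrite ipE ![vec3 _ _ _ _ _]mxE /= /d /b /A; field; rewrite gt_eqF.
  by apply/ip_pos/(cV_neq0 (i := 1)); rewrite mxE /= oner_neq0.
have G11E : G 1 1 = d + A * b ^+ 2 by rewrite /d; ring.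
have ipS : ip =2 lagrange_form A d k b c e.
  by move=> u v; rewrite /lagrange_form ipE G11E /k /e /c /b /A; field; rewrite !gt_eqF.
have k_gt0 : 0 < k.
  have -> : k = ip (vec3 1 (- e) (e * b - c)) (vec3 1 (- e) (e * b - c)).
    by rewrite ipS /lagrange_form ![vec3 _ _ _ _ _]mxE /=; ring.
  by apply/ip_pos/(cV_neq0 (i := 0)); rewrite mxE /= oner_neq0.
by exists A, d, k, b, c, e.
Qed.

Lemma lagrange_form_iso_U_mat (R : realType) (a A d k b c e : R)
    (ip : 'cV[R]_3 -> 'cV[R]_3 -> R) :
  0 < A -> 0 < d -> 0 < k ->
  ip =2 lagrange_form A d k b c e ->
  exists lam : R, iso_up_to_scaling a ip (gl_act (U_mat lam) ip0).
Proof.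
move=> A_gt0 d_gt0 k_gt0 ipE.
pose p := Num.sqrt (d / k); pose q := Num.sqrt (A / k); pose lam := - (q * b) / p.
have p_gt0 : 0 < p by rewrite sqrtr_gt0 divr_gt0.
have q_gt0 : 0 < q by rewrite sqrtr_gt0 divr_gt0.
have kp2 : k * p ^+ 2 = d.
  by rewrite sqr_sqrtr ?ltW ?divr_gt0 // mulrC divfK ?gt_eqF.
have kq2 : k * q ^+ 2 = A.
  by rewrite sqr_sqrtr ?ltW ?divr_gt0 // mulrC divfK ?gt_eqF.
exists lam, k, (r3a_aut_mx (p * e) (q * c + lam * p * e) p q); split => //; split.
  by apply: r3a_aut_mx_lie_aut; rewrite gt_eqF.
move=> u v; rewrite gl_act_U_mat_ip0E !mulmx3E !mxE /= ipE /lagrange_form -kp2 -kq2 /lam.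
by field; rewrite gt_eqF.
Qed.

Theorem proposition3p9 (R : realType) (a : R) (ha1 : -1 <= a) (ha2 : a < 1) :
  (forall lam : R, is_inner_product (gl_act (U_mat lam) ip0)) /\
  (forall ip : 'cV[R]_3 -> 'cV[R]_3 -> R, is_inner_product ip ->
     exists lam : R, iso_up_to_scaling a ip (gl_act (U_mat lam) ip0)).
Proof.
split=> [lam | ip ip_inner].
  exact: gl_act_inner_product (U_mat_unit lam) (ip0_inner_product R).
have [A [d [k [b [c [e [A_gt0 d_gt0 k_gt0 ipE]]]]]]] :=
  inner_product3_lagrange_form ip_inner.
exact: lagrange_form_iso_U_mat A_gt0 d_gt0 k_gt0 ipE.
Qed.
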